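(* Let $A$ be an Archimedean semiprime $f$-algebra which is Dedekind complete. Then every intermediate algebra in $A$ (i.e., every subalgebra of $A$ containing $A_b$) is an order ideal of $A$. In particular, every intermediate algebra in $A$ is a Dedekind complete semiprime $f$-algebra.
   Context: An $f$-algebra is a real associative algebra that is a vector lattice with $A_+A_+\subseteq A_+$ and such that $a\wedge b=0$ implies $ac\wedge b=ca\wedge b=0$ for all $c\in A_+$; it is semiprime if $0$ is its only nilpotent element. $A_b=\{a\in A: a^2\le\mu|a|\text{ for some }\mu\in(0,\infty)\}$ is the set of bounded elements. An order ideal is a solid vector subspace. *)

(* Every structural notion is relative to a carrier predicate D : A -> Prop,
   so that it can be applied both to A itself (D = full) and to a subset
   B of A equipped with the induced operations and order. *)
From mathcomp Require Import all_boot all_order all_algebra.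
From mathcomp Require Import reals.
Set Implicit Arguments. Unset Strict Implicit. Unset Printing Implicit Defensive.
Import Order.TTheory GRing.Theory Num.Theory.
Local Open Scope ring_scope.

Section FAlgebras.
Variables (R : realType) (A : lmodType R).

Definition full : A -> Prop := fun _ => True.

Section Ops.
Variables (mul : A -> A -> A) (le : A -> A -> Prop) (meet join : A -> A -> A).

Definition is_subspace (D : A -> Prop) : Prop :=
  D 0 /\ (forall x y, D x -> D y -> D (x + y)) /\
  (forall (c : R) x, D x -> D (c *: x)).

Definition is_assoc_algebra (D : A -> Prop) : Prop :=
  is_subspace D /\
  (forall x y, D x -> D y -> D (mul x y)) /\
  (forall x y z, D x -> D y -> D z -> mul x (mul y z) = mul (mul x y) z) /\
  (forall x y z, D x -> D y -> D z -> mul (x + y) z = mul x z + mul y z) /\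
  (forall x y z, D x -> D y -> D z -> mul x (y + z) = mul x y + mul x z) /\
  (forall (c : R) x y, D x -> D y -> mul (c *: x) y = c *: mul x y) /\
  (forall (c : R) x y, D x -> D y -> mul x (c *: y) = c *: mul x y).

Definition is_ordered_vspace (D : A -> Prop) : Prop :=
  is_subspace D /\
  (forall x, D x -> le x x) /\
  (forall x y, D x -> D y -> le x y -> le y x -> x = y) /\
  (forall x y z, D x -> D y -> D z -> le x y -> le y z -> le x z) /\
  (forall x y z, D x -> D y -> D z -> le x y -> le (x + z) (y + z)) /\
  (forall (c : R) x, D x -> 0 <= c -> le 0 x -> le 0 (c *: x)).

Definition is_lattice_ops (D : A -> Prop) : Prop :=
  (forall x y, D x -> D y ->
     D (meet x y) /\ le (meet x y) x /\ le (meet x y) y /\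
     (forall z, D z -> le z x -> le z y -> le z (meet x y))) /\
  (forall x y, D x -> D y ->
     D (join x y) /\ le x (join x y) /\ le y (join x y) /\
     (forall z, D z -> le x z -> le y z -> le (join x y) z)).

Definition is_vector_lattice (D : A -> Prop) : Prop :=
  is_ordered_vspace D /\ is_lattice_ops D.

Definition is_f_algebra (D : A -> Prop) : Prop :=
  is_assoc_algebra D /\ is_vector_lattice D /\
  (forall x y, D x -> D y -> le 0 x -> le 0 y -> le 0 (mul x y)) /\
  (forall a b c, D a -> D b -> D c -> meet a b = 0 -> le 0 c ->
     meet (mul a c) b = 0 /\ meet (mul c a) b = 0).

(* npow a n = a^(n+1) *)
Fixpoint npow (a : A) (n : nat) : A :=
  match n with O => a | S m => mul a (npow a m) end.

Definition nilpotent (a : A) : Prop := exists n : nat, npow a n = 0.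

Definition semiprime (D : A -> Prop) : Prop :=
  forall a, D a -> nilpotent a -> a = 0.

Definition archimedean (D : A -> Prop) : Prop :=
  forall x y, D x -> D y -> le 0 x -> (forall n : nat, le (x *+ n) y) -> x = 0.

Definition is_ub (D S : A -> Prop) (u : A) : Prop :=
  D u /\ forall x, S x -> le x u.

Definition is_sup (D S : A -> Prop) (s : A) : Prop :=
  is_ub D S s /\ forall u, is_ub D S u -> le s u.

Definition dedekind_complete (D : A -> Prop) : Prop :=
  forall S : A -> Prop, (forall x, S x -> D x) -> (exists x, S x) ->
    (exists u, is_ub D S u) -> exists s, is_sup D S s.

Definition absv (x : A) : A := join x (- x).

(* A_b = {a : a^2 <= mu |a| for some mu in (0, oo)} *)
Definition bounded_elt (a : A) : Prop :=
  exists mu : R, 0 < mu /\ le (mul a a) (mu *: absv a).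

Definition is_subalgebra (B : A -> Prop) : Prop :=
  is_subspace B /\ (forall x y, B x -> B y -> B (mul x y)).

Definition intermediate_algebra (B : A -> Prop) : Prop :=
  is_subalgebra B /\ (forall a, bounded_elt a -> B a).

Definition order_ideal (B : A -> Prop) : Prop :=
  is_subspace B /\ (forall a b, B b -> le (absv a) (absv b) -> B a).

End Ops.
End FAlgebras.
Arguments full {R A}.

From mathcomp Require Import all_boot all_order all_algebra.
From mathcomp Require Import reals.
From mathcomp Require Import lra.
Set Implicit Arguments. Unset Strict Implicit. Unset Printing Implicit Defensive.
Import GRing.Theory Num.Theory.
Local Open Scope ring_scope.

(* Let B be an intermediate algebra, b in B and 0 <= f <= |b|.  Dedekind
   completeness yields u >= 0 with u + b^2 u = f (u is the supremum of the
   x >= 0 with x + b^2 x <= f).  A computation in the f-algebra shows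
   u^2 <= u and (|b| u)^2 <= |b| u, so u and b u are bounded elements, hence
   lie in B, and so does f = u + b (b u).  Thus B is solid, and an order ideal
   inherits lattice operations, suprema and the f-algebra axioms from A.
   The inequalities rest on two facts: positive elements commute (this is
   where the Archimedean property enters), and, by semiprimeness, x >= 0
   as soon as z x >= 0 for some z >= 0 whose band contains x. *)

(** * Vector lattices *)

Section VectorLattice.
Variables (R : realType) (A : lmodType R) (le : A -> A -> Prop) (meet join : A -> A -> A).
Hypothesis vlA : is_vector_lattice le meet join full.

Lemma lexx x : le x x.
Proof. by case: vlA => -[_ [refl _]] _; apply: refl. Qed.

Lemma le_anti x y : le x y -> le y x -> x = y.
Proof. by case: vlA => -[_ [_ [anti _]]] _; apply: anti. Qed.

Lemma le_trans x y z : le x y -> le y z -> le x z.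
Proof. by case: vlA => -[_ [_ [_ [trans _]]]] _; apply: trans. Qed.

Lemma le_add2r z x y : le x y -> le (x + z) (y + z).
Proof. by case: vlA => -[_ [_ [_ [_ [add _]]]]] _; apply: add. Qed.

Lemma scale_ge0 (c : R) x : 0 <= c -> le 0 x -> le 0 (c *: x).
Proof. by case: vlA => -[_ [_ [_ [_ [_ scale]]]]] _; apply: scale. Qed.

Lemma le_meetl x y : le (meet x y) x.
Proof. by case: vlA => _ [/(_ x y I I) [_ []]]. Qed.

Lemma le_meetr x y : le (meet x y) y.
Proof. by case: vlA => _ [/(_ x y I I) [_ [_ []]]]. Qed.

Lemma meet_greatest x y z : le z x -> le z y -> le z (meet x y).
Proof. by case: vlA => _ [/(_ x y I I) [_ [_ [_ glb]]]] _; apply: glb. Qed.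

Lemma le_joinl x y : le x (join x y).
Proof. by case: vlA => _ [_ /(_ x y I I) [_ []]]. Qed.

Lemma le_joinr x y : le y (join x y).
Proof. by case: vlA => _ [_ /(_ x y I I) [_ [_ []]]]. Qed.

Lemma join_least x y z : le x z -> le y z -> le (join x y) z.
Proof. by case: vlA => _ [_ /(_ x y I I) [_ [_ [_ lub]]]]; apply: lub. Qed.

Lemma sub_ge0 x y : le x y -> le 0 (y - x).
Proof. by move/(le_add2r (- x)); rewrite subrr. Qed.

Lemma le_of_sub_ge0 x y : le 0 (y - x) -> le x y.
Proof. by move/(le_add2r x); rewrite add0r subrK. Qed.

Lemma le_of_sub_le0 x y : le (x - y) 0 -> le x y.
Proof. by move/(le_add2r y); rewrite subrK add0r. Qed.

Lemma le_add2l z x y : le x y -> le (z + x) (z + y).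
Proof. by move=> h; rewrite ![z + _]addrC; apply: le_add2r. Qed.

Lemma le_add x y z w : le x y -> le z w -> le (x + z) (y + w).
Proof. by move=> h1 h2; apply: le_trans (le_add2r z h1) (le_add2l y h2). Qed.

Lemma add_ge0 x y : le 0 x -> le 0 y -> le 0 (x + y).
Proof. by move=> h1 h2; have := le_add h1 h2; rewrite addr0. Qed.

Lemma le_addr x y : le 0 y -> le x (x + y).
Proof. by move=> h; have := le_add2l x h; rewrite addr0. Qed.

Lemma le_subr x y : le 0 y -> le (x - y) x.
Proof. by move=> h; apply: le_of_sub_ge0; rewrite opprB addrCA subrr addr0. Qed.

Lemma le_opp x y : le x y -> le (- y) (- x).
Proof. by move/sub_ge0=> h; apply: le_of_sub_ge0; rewrite opprK addrC. Qed.

Lemma le_oppK x y : le (- y) (- x) -> le x y.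
Proof. by move/le_opp; rewrite !opprK. Qed.

Lemma opp_le0 x : le 0 x -> le (- x) 0.
Proof. by move/le_opp; rewrite oppr0. Qed.

Lemma ge0_opp_le x : le 0 x -> le (- x) x.
Proof. by move=> h; apply: le_trans (opp_le0 h) h. Qed.

Lemma le_scale2l (c : R) x y : 0 <= c -> le x y -> le (c *: x) (c *: y).
Proof.
by move=> c0 /sub_ge0 h; apply: le_of_sub_ge0; rewrite -scalerBr; apply: scale_ge0.
Qed.

Lemma le_scale2r (c d : R) x : c <= d -> le 0 x -> le (c *: x) (d *: x).
Proof.
move=> cd x0; apply: le_of_sub_ge0; rewrite -scalerBl.
by apply: scale_ge0 => //; rewrite subr_ge0.
Qed.

Lemma scaleKV (c : R) (x : A) : 0 < c -> c *: (c^-1 *: x) = x.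
Proof. by move=> c0; rewrite scalerA divff ?scale1r // lt0r_neq0. Qed.

Lemma scaleVK (c : R) (x : A) : 0 < c -> c^-1 *: (c *: x) = x.
Proof. by move=> c0; rewrite scalerA mulVf ?scale1r // lt0r_neq0. Qed.

Lemma le_scale2lK (c : R) x y : 0 < c -> le (c *: x) (c *: y) -> le x y.
Proof.
move=> c0 h; have ci : 0 <= c^-1 by rewrite invr_ge0; lra.
by have := le_scale2l ci h; rewrite !scaleVK.
Qed.

Lemma meetC x y : meet x y = meet y x.
Proof. by apply: le_anti; apply: meet_greatest; first [exact: le_meetl | exact: le_meetr]. Qed.

Lemma joinC x y : join x y = join y x.
Proof. by apply: le_anti; apply: join_least; first [exact: le_joinl | exact: le_joinr]. Qed.

Lemma meetxx x : meet x x = x.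
Proof. by apply: le_anti; [apply: le_meetl | apply: meet_greatest; apply: lexx]. Qed.

Lemma le_meet2 x y x' y' : le x x' -> le y y' -> le (meet x y) (meet x' y').
Proof.
move=> h1 h2; apply: meet_greatest.
  exact: le_trans (le_meetl _ _) h1.
exact: le_trans (le_meetr _ _) h2.
Qed.

Lemma le_join2 x y x' y' : le x x' -> le y y' -> le (join x y) (join x' y').
Proof.
move=> h1 h2; apply: join_least.
  exact: le_trans h1 (le_joinl _ _).
exact: le_trans h2 (le_joinr _ _).
Qed.

Lemma addr_joinl z x y : join x y + z = join (x + z) (y + z).
Proof.
apply: le_anti; last by apply: join_least; apply: le_add2r; [apply: le_joinl | apply: le_joinr].
set j := join (x + z) (y + z).
have shift w : le (w + z) j -> le w (j - z) by move/(le_add2r (- z)); rewrite addrK.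
have := join_least (shift _ (le_joinl _ _)) (shift _ (le_joinr _ _)).
by move/(le_add2r z); rewrite subrK.
Qed.

Lemma addr_meetl z x y : meet x y + z = meet (x + z) (y + z).
Proof.
apply: le_anti; first by apply: meet_greatest; apply: le_add2r; [apply: le_meetl | apply: le_meetr].
set m := meet (x + z) (y + z).
have shift w : le m (w + z) -> le (m - z) w by move/(le_add2r (- z)); rewrite addrK.
have := meet_greatest (shift _ (le_meetl _ _)) (shift _ (le_meetr _ _)).
by move/(le_add2r z); rewrite subrK.
Qed.

Lemma oppr_join x y : - join x y = meet (- x) (- y).
Proof.
apply: le_anti.
  by apply: meet_greatest; apply: le_opp; [apply: le_joinl | apply: le_joinr].
apply: le_oppK; rewrite opprK; apply: join_least; apply: le_oppK; rewrite opprK.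
  exact: le_meetl.
exact: le_meetr.
Qed.

Lemma oppr_meet x y : - meet x y = join (- x) (- y).
Proof. by rewrite -[x]opprK -[y]opprK -oppr_join !opprK. Qed.

Lemma add_join_meet x y : x + y = join x y + meet x y.
Proof.
apply: (addIr (- join x y)); rewrite [join x y + _]addrC addrK oppr_join addrC.
by rewrite addr_meetl addrA addNr add0r [x + y]addrC addrA addNr add0r meetC.
Qed.

Lemma meet_ge0 x y : le 0 x -> le 0 y -> le 0 (meet x y).
Proof. by move=> h1 h2; apply: meet_greatest. Qed.

Lemma meet0x x : le 0 x -> meet 0 x = 0.
Proof. by move=> h; apply: le_anti; [apply: le_meetl | apply: meet_greatest (lexx 0) h]. Qed.

Lemma meetZ (c : R) x y : 0 < c -> meet (c *: x) (c *: y) = c *: meet x y.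
Proof.
move=> c0; have c0' : 0 <= c by lra.
have ci : 0 <= c^-1 by rewrite invr_ge0.
apply: le_anti; last first.
  by apply: meet_greatest; apply: le_scale2l c0' _; [apply: le_meetl | apply: le_meetr].
rewrite -[meet (c *: x) _](scaleKV _ c0); apply: le_scale2l c0' _.
by apply: meet_greatest; rewrite -[X in le _ X](scaleVK _ c0); apply: le_scale2l ci _;
  [apply: le_meetl | apply: le_meetr].
Qed.

Definition pos x := join x 0.
Definition neg x := join (- x) 0.
Local Notation abs x := (absv join x).

Lemma pos_ge0 x : le 0 (pos x). Proof. exact: le_joinr. Qed.
Lemma neg_ge0 x : le 0 (neg x). Proof. exact: le_joinr. Qed.
Lemma le_pos x : le x (pos x). Proof. exact: le_joinl. Qed.

Lemma pos_least x y : le x y -> le 0 y -> le (pos x) y.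
Proof. exact: join_least. Qed.

Lemma le_pos2 x y : le x y -> le (pos x) (pos y).
Proof. by move=> h; apply: le_join2 h (lexx 0). Qed.

Lemma ge0_pos x : le 0 x -> pos x = x.
Proof. by move=> h; apply: le_anti; [apply: pos_least (lexx x) h | apply: le_pos]. Qed.

Lemma le0_pos x : le x 0 -> pos x = 0.
Proof. by move=> h; apply: le_anti; [apply: pos_least h (lexx 0) | apply: pos_ge0]. Qed.

Lemma ge0_neg x : le 0 x -> neg x = 0.
Proof. by move=> h; apply: le0_pos; apply: opp_le0. Qed.

Lemma pos_eq0_le0 x : pos x = 0 -> le x 0.
Proof. by move=> h; rewrite -h; apply: le_pos. Qed.

Lemma pos_sub_neg x : pos x - neg x = x.
Proof.
have -> : neg x = - meet x 0 by rewrite oppr_meet oppr0.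
by rewrite opprK /pos -add_join_meet addr0.
Qed.

Lemma neg_pos_sub x : neg x = pos x - x.
Proof. by rewrite -{3}(pos_sub_neg x) opprB addrCA subrr addr0. Qed.

Lemma meet_pos_neg x : meet (pos x) (neg x) = 0.
Proof.
rewrite neg_pos_sub.
have -> : meet (pos x) (pos x - x) = meet 0 (- x) + pos x.
  by rewrite addr_meetl add0r addrC.
by rewrite -{1}oppr0 -oppr_join joinC addNr.
Qed.

Lemma le_abs x : le x (abs x). Proof. exact: le_joinl. Qed.
Lemma le_absN x : le (- x) (abs x). Proof. exact: le_joinr. Qed.

Lemma abs_le x y : le (abs x) y <-> le x y /\ le (- x) y.
Proof.
split; last by case=> h1 h2; apply: join_least.
by move=> h; split; apply: le_trans h; [apply: le_abs | apply: le_absN].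
Qed.

Lemma abs_ge0 x : le 0 (abs x).
Proof.
have := le_add (le_abs x) (le_absN x); rewrite subrr -mulr2n -scaler_nat.
have two_gt0 : 0 < 2 :> R by [].
by move/(scale_ge0 (_ : 0 <= 2^-1)); rewrite scaleVK //; apply; rewrite invr_ge0.
Qed.

Lemma absN x : abs (- x) = abs x.
Proof. by rewrite /absv opprK joinC. Qed.

Lemma ge0_abs x : le 0 x -> abs x = x.
Proof.
move=> h; apply: le_anti; last exact: le_abs.
by apply/abs_le; split; [apply: lexx | apply: ge0_opp_le].
Qed.

Lemma abs0 : abs 0 = 0. Proof. exact: ge0_abs (lexx 0). Qed.

Lemma abs_eq0 x : abs x = 0 -> x = 0.
Proof.
move=> h; apply: le_anti; first by rewrite -h; apply: le_abs.
by apply: le_oppK; rewrite oppr0 -h; apply: le_absN.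
Qed.

Lemma abs_pos_neg x : abs x = pos x + neg x.
Proof.
rewrite add_join_meet meet_pos_neg addr0; apply: le_anti.
  apply: join_least; first exact: le_trans (le_pos x) (le_joinl _ _).
  exact: le_trans (le_pos (- x)) (le_joinr _ _).
by apply: join_least; apply: join_least;
  [apply: le_abs | apply: abs_ge0 | apply: le_absN | apply: abs_ge0].
Qed.

Lemma pos_le_abs x : le (pos x) (abs x).
Proof. by rewrite abs_pos_neg; apply: le_addr; apply: neg_ge0. Qed.

Lemma neg_le_abs x : le (neg x) (abs x).
Proof. by rewrite abs_pos_neg addrC; apply: le_addr; apply: pos_ge0. Qed.

Lemma le_absD x y : le (abs (x + y)) (abs x + abs y).
Proof.
apply/abs_le; split; first exact: le_add (le_abs _) (le_abs _).
by rewrite opprD; apply: le_add; apply: le_absN.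
Qed.

Lemma le_absD2 x y u v : le (abs x) u -> le (abs y) v -> le (abs (x + y)) (u + v).
Proof. by move=> h1 h2; apply: le_trans (le_absD _ _) _; apply: le_add. Qed.

Lemma absZ (c : R) x : 0 <= c -> abs (c *: x) = c *: abs x.
Proof.
rewrite le0r => /orP [/eqP -> | c0]; first by rewrite !scale0r abs0.
have c0' : 0 <= c by lra.
have ci : 0 <= c^-1 by rewrite invr_ge0.
apply: le_anti.
  apply/abs_le; rewrite -scalerN.
  by split; apply: le_scale2l c0' _; [apply: le_abs | apply: le_absN].
rewrite -[abs (c *: x)](scaleKV _ c0); apply: le_scale2l c0' _.
apply/abs_le; rewrite -[x in le x _](scaleVK _ c0) -[- x](scaleVK _ c0) scalerN.
by split; apply: le_scale2l ci _; [apply: le_abs | apply: le_absN].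
Qed.

Lemma disjoint_pos_neg p q : le 0 p -> le 0 q -> meet p q = 0 ->
  pos (p - q) = p /\ neg (p - q) = q.
Proof.
move=> p0 q0 pq.
have hp : pos (p - q) = p.
  rewrite /pos -(subrr q) -addr_joinl.
  have -> : join p q = p + q by rewrite add_join_meet pq addr0.
  by rewrite addrK.
by split=> //; rewrite neg_pos_sub hp opprB addrCA subrr addr0.
Qed.

Lemma disjoint_le y p q : le 0 y -> le 0 q -> le q p -> meet y p = 0 -> meet y q = 0.
Proof.
move=> y0 q0 qp h; apply: le_anti; last exact: meet_ge0.
by rewrite -h; apply: le_meet2 (lexx y) qp.
Qed.

Lemma disjointD y p q : le 0 y -> le 0 p -> le 0 q -> meet y p = 0 -> meet y q = 0 ->
  meet y (p + q) = 0.
Proof.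
move=> y0 p0 q0 h1 h2.
set m := meet y (p + q).
suff : le (m - meet y p) (meet y q).
  by rewrite h1 h2 subr0 => h; apply: le_anti h (meet_ge0 y0 (add_ge0 p0 q0)).
apply: meet_greatest.
  by apply: le_trans (le_meetl y (p + q)); apply: le_subr; apply: meet_ge0.
rewrite oppr_meet addrC addr_joinl; apply: join_least.
  apply: le_trans q0; apply: le_of_sub_ge0; rewrite sub0r opprD opprK.
  by apply: sub_ge0; apply: le_meetl.
apply: le_of_sub_ge0; rewrite opprD opprK addrA [q + p]addrC.
by apply: sub_ge0; apply: le_meetr.
Qed.

Lemma disjointZ y x (c : R) : le 0 y -> le 0 x -> 0 <= c -> meet y x = 0 ->
  meet y (c *: x) = 0.
Proof.
move=> y0 x0 c0 h; have c1 : 0 < 1 + c by lra.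
apply: le_anti; last by apply: meet_ge0 => //; apply: scale_ge0.
rewrite -(scaler0 _ (1 + c)) -h -meetZ //.
apply: le_meet2; last by apply: le_scale2r => //; lra.
by rewrite -{1}[y]scale1r; apply: le_scale2r => //; lra.
Qed.

Lemma le_abs_disjointD x y z : meet (abs x) (abs y) = 0 -> le (abs x) z -> le (abs y) z ->
  le (abs (x + y)) z.
Proof.
move=> d h1 h2; apply: le_trans (le_absD x y) _.
by rewrite add_join_meet d addr0; apply: join_least.
Qed.

Lemma pos_sub_pos y c : le 0 c -> pos (y - c) = pos (pos y - c).
Proof.
move=> c0; rewrite /pos addr_joinl add0r; apply: le_anti.
  by apply: le_join2; [apply: le_joinl | apply: lexx].
apply: join_least; last exact: le_joinr.
apply: join_least; first exact: le_joinl.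
by apply: le_trans (le_joinr _ _); apply: opp_le0.
Qed.

Lemma pos_decrement y c : le 0 c ->
  [/\ le 0 (pos y - pos (y - c)), le (pos y - pos (y - c)) c &
      meet (c - (pos y - pos (y - c))) (pos (y - c)) = 0].
Proof.
move=> c0; split.
- by apply: sub_ge0; apply: le_pos2; apply: le_subr.
- apply: le_of_sub_ge0.
  have -> : c - (pos y - pos (y - c)) = (pos (y - c) + c) - pos y.
    by rewrite opprB addrCA addrA.
  apply: sub_ge0; rewrite /pos addr_joinl subrK add0r.
  by apply: le_join2; [apply: lexx | exact: c0].
- have -> : c - (pos y - pos (y - c)) = neg (pos y - c).
    by rewrite neg_pos_sub -pos_sub_pos // !opprB addrCA.
  by rewrite meetC pos_sub_pos // meet_pos_neg.
Qed.

Lemma le_abs_add x y : le (abs x) (abs x + abs y).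
Proof. exact: le_addr (abs_ge0 y). Qed.

Lemma abs_meet_le x y : le (abs (meet x y)) (abs x + abs y).
Proof.
apply/abs_le; rewrite oppr_meet; split.
  exact: le_trans (le_meetl x y) (le_trans (le_abs x) (le_abs_add x y)).
apply: join_least; first exact: le_trans (le_absN x) (le_abs_add x y).
by rewrite addrC; apply: le_trans (le_absN y) (le_abs_add y x).
Qed.

Lemma abs_join_le x y : le (abs (join x y)) (abs x + abs y).
Proof.
apply/abs_le; rewrite oppr_join; split.
  apply: join_least; first exact: le_trans (le_abs x) (le_abs_add x y).
  by rewrite addrC; apply: le_trans (le_abs y) (le_abs_add y x).
exact: le_trans (le_meetl _ _) (le_trans (le_absN x) (le_abs_add x y)).
Qed.

Lemma abs_le_between x y z : le x y -> le y z -> le (abs y) (abs x + abs z).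
Proof.
move=> xy yz; apply/abs_le; split.
  by rewrite addrC; apply: le_trans yz (le_trans (le_abs z) (le_abs_add z x)).
exact: le_trans (le_opp xy) (le_trans (le_absN x) (le_abs_add x z)).
Qed.

Lemma is_ordered_vspace_sub B : is_subspace B -> is_ordered_vspace le B.
Proof.
move=> subB; split=> //; split; first by move=> x _; apply: lexx.
split; first by move=> x y _ _; apply: le_anti.
split; first by move=> x y z _ _ _; apply: le_trans.
split; first by move=> x y z _ _ _; apply: le_add2r.
by move=> c x _; apply: scale_ge0.
Qed.

Lemma order_ideal_abs B x : order_ideal le join B -> B x -> B (abs x).
Proof.
case=> _ solidB Bx; apply: (solidB _ x Bx).
by rewrite (ge0_abs (abs_ge0 x)); apply: lexx.
Qed.

Lemma order_ideal_le_abs_add B x y z : order_ideal le join B -> B x -> B y ->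
  le (abs z) (abs x + abs y) -> B z.
Proof.
move=> idB Bx By zxy; case: (idB) => [[_ [BD _]] solidB].
apply: (solidB _ (abs x + abs y)); first by apply: BD; apply: order_ideal_abs.
by rewrite (ge0_abs (add_ge0 (abs_ge0 x) (abs_ge0 y))).
Qed.

Lemma order_ideal_vector_lattice B : order_ideal le join B ->
  is_vector_lattice le meet join B.
Proof.
move=> idB; split; first exact: is_ordered_vspace_sub idB.1.
split=> x y Bx By.
  split; first exact: order_ideal_le_abs_add idB Bx By (abs_meet_le x y).
  by split; [apply: le_meetl | split; [apply: le_meetr | move=> z _; apply: meet_greatest]].
split; first exact: order_ideal_le_abs_add idB Bx By (abs_join_le x y).
by split; [apply: le_joinl | split; [apply: le_joinr | move=> z _; apply: join_least]].
Qed.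

Hypothesis dcA : dedekind_complete le full.

Lemma dedekind_sup S : (exists x, S x) -> (exists u, forall x, S x -> le x u) ->
  exists s, (forall x, S x -> le x s) /\ (forall u, (forall x, S x -> le x u) -> le s u).
Proof.
move=> [x Sx] [u Su].
have [s [[_ s_ub] s_least]] := dcA (fun _ _ => I) (ex_intro _ x Sx) (ex_intro _ u (conj I Su)).
by exists s; split=> // v v_ub; apply: s_least.
Qed.

Lemma order_ideal_dedekind_complete B : order_ideal le join B -> dedekind_complete le B.
Proof.
move=> idB S SB [x Sx] [u [Bu u_ub]].
have [s [s_ub s_least]] := dedekind_sup (ex_intro _ x Sx) (ex_intro _ u u_ub).
exists s; split; last by move=> v [_ v_ub]; apply: s_least.
split=> //; apply: order_ideal_le_abs_add idB (SB _ Sx) Bu _.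
exact: abs_le_between (s_ub _ Sx) (s_least _ u_ub).
Qed.

(** * f-algebras *)

Section FAlgebra.
Variable mul : A -> A -> A.
Hypothesis algA : is_assoc_algebra mul full.
Hypothesis mul_ge0 : forall x y, le 0 x -> le 0 y -> le 0 (mul x y).
Hypothesis meet_mul : forall a b c, meet a b = 0 -> le 0 c ->
  meet (mul a c) b = 0 /\ meet (mul c a) b = 0.

Lemma mulA x y z : mul x (mul y z) = mul (mul x y) z.
Proof. by case: algA => _ [_ [assoc _]]; apply: assoc. Qed.

Lemma mulDx x y z : mul (x + y) z = mul x z + mul y z.
Proof. by case: algA => _ [_ [_ [distl _]]]; apply: distl. Qed.

Lemma mulxD x y z : mul x (y + z) = mul x y + mul x z.
Proof. by case: algA => _ [_ [_ [_ [distr _]]]]; apply: distr. Qed.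

Lemma mulZx (c : R) x y : mul (c *: x) y = c *: mul x y.
Proof. by case: algA => _ [_ [_ [_ [_ [scalel _]]]]]; apply: scalel. Qed.

Lemma mulxZ (c : R) x y : mul x (c *: y) = c *: mul x y.
Proof. by case: algA => _ [_ [_ [_ [_ [_ scaler]]]]]; apply: scaler. Qed.

Lemma mul0x x : mul 0 x = 0.
Proof. by apply: (addrI (mul 0 x)); rewrite -mulDx !addr0. Qed.

Lemma mulx0 x : mul x 0 = 0.
Proof. by apply: (addrI (mul x 0)); rewrite -mulxD !addr0. Qed.

Lemma mulNx x y : mul (- x) y = - mul x y.
Proof. by apply: (addrI (mul x y)); rewrite -mulDx !subrr mul0x. Qed.

Lemma mulxN x y : mul x (- y) = - mul x y.
Proof. by apply: (addrI (mul x y)); rewrite -mulxD !subrr mulx0. Qed.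

Lemma mulBx x y z : mul (x - y) z = mul x z - mul y z.
Proof. by rewrite mulDx mulNx. Qed.

Lemma mulxB x y z : mul x (y - z) = mul x y - mul x z.
Proof. by rewrite mulxD mulxN. Qed.

Lemma le_mul2l c x y : le 0 c -> le x y -> le (mul c x) (mul c y).
Proof. by move=> c0 /sub_ge0 h; apply: le_of_sub_ge0; rewrite -mulxB; apply: mul_ge0. Qed.

Lemma le_mul2r c x y : le 0 c -> le x y -> le (mul x c) (mul y c).
Proof. by move=> c0 /sub_ge0 h; apply: le_of_sub_ge0; rewrite -mulBx; apply: mul_ge0. Qed.

Lemma disjoint_mul y p c : meet y p = 0 -> le 0 c ->
  meet y (mul c p) = 0 /\ meet y (mul p c) = 0.
Proof.
by rewrite meetC => /meet_mul h /h [h1 h2]; rewrite meetC h2 meetC h1.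
Qed.

Lemma meet_eq0_ge0l p q : meet p q = 0 -> le 0 p.
Proof. by move=> h; rewrite -h; apply: le_meetl. Qed.

Lemma meet_eq0_ge0r p q : meet p q = 0 -> le 0 q.
Proof. by move=> h; rewrite -h; apply: le_meetr. Qed.

Lemma disjoint_mul_eq0 p q : meet p q = 0 -> mul p q = 0 /\ mul q p = 0.
Proof.
move=> pq; have p0 := meet_eq0_ge0l pq; have q0 := meet_eq0_ge0r pq.
have [pqq qpq] := meet_mul pq q0; rewrite meetC in pqq; rewrite meetC in qpq.
split; first by have [_] := meet_mul pqq p0; rewrite meetxx.
by have [] := meet_mul qpq p0; rewrite meetxx.
Qed.

Lemma pos_neg_mull c x : le 0 c ->
  pos (mul c x) = mul c (pos x) /\ neg (mul c x) = mul c (neg x).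
Proof.
move=> c0; have -> : mul c x = mul c (pos x) - mul c (neg x) by rewrite -mulxB pos_sub_neg.
apply: disjoint_pos_neg; [exact: mul_ge0 (pos_ge0 x) | exact: mul_ge0 (neg_ge0 x) |].
have [d _] := disjoint_mul (meet_pos_neg x) c0; rewrite meetC in d.
by have [d' _] := disjoint_mul d c0; rewrite meetC.
Qed.

Lemma pos_neg_mulr c x : le 0 c ->
  pos (mul x c) = mul (pos x) c /\ neg (mul x c) = mul (neg x) c.
Proof.
move=> c0; have -> : mul x c = mul (pos x) c - mul (neg x) c by rewrite -mulBx pos_sub_neg.
apply: disjoint_pos_neg; [exact: mul_ge0 (pos_ge0 x) c0 | exact: mul_ge0 (neg_ge0 x) c0 |].
have [_ d] := disjoint_mul (meet_pos_neg x) c0; rewrite meetC in d.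
by have [_ d'] := disjoint_mul d c0; rewrite meetC.
Qed.

Lemma abs_mulr c x : le 0 c -> abs (mul x c) = mul (abs x) c.
Proof. by move=> /(pos_neg_mulr x) [hp hn]; rewrite !abs_pos_neg hp hn mulDx. Qed.

Lemma sqr_abs x : mul x x = mul (abs x) (abs x).
Proof.
have [pn np] := disjoint_mul_eq0 (meet_pos_neg x).
rewrite abs_pos_neg -{1 2}(pos_sub_neg x) !mulBx !mulxB !mulDx !mulxD pn np.
by rewrite !subr0 !addr0 !add0r opprK.
Qed.

Lemma sqr_ge0 x : le 0 (mul x x).
Proof. by rewrite sqr_abs; apply: mul_ge0; apply: abs_ge0. Qed.

Hypothesis spA : semiprime mul full.

Lemma mul_eq0_disjoint p q : le 0 p -> le 0 q -> mul p q = 0 -> meet p q = 0.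
Proof.
move=> p0 q0 pq; have m0 := meet_ge0 p0 q0.
have mm : le (mul (meet p q) (meet p q)) 0.
  rewrite -pq; apply: le_trans (le_mul2r m0 (le_meetl p q)) _.
  exact: le_mul2l p0 (le_meetr p q).
by apply: spA => //; exists 1%N; apply: le_anti mm (mul_ge0 m0 m0).
Qed.

Lemma band_mul_ge0 z x w : le 0 z -> le 0 (mul z x) -> le (abs x) w ->
  (forall y, le 0 y -> meet y z = 0 -> meet y w = 0) -> le 0 x.
Proof.
move=> z0 zx xw zw.
have [_] := pos_neg_mull x z0; rewrite ge0_neg // => zn.
have nz : meet (neg x) z = 0.
  by rewrite meetC; apply: mul_eq0_disjoint z0 (neg_ge0 x) _.
have nn : meet (neg x) (neg x) = 0.
  apply: disjoint_le (neg_ge0 x) (neg_ge0 x) _ (zw _ (neg_ge0 x) nz).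
  exact: le_trans (neg_le_abs x) xw.
by rewrite meetxx in nn; rewrite -(pos_sub_neg x) nn subr0; apply: pos_ge0.
Qed.

(** * Positive elements commute *)

Definition com x y := mul x y - mul y x.

Lemma comDl x y z : com (x + y) z = com x z + com y z.
Proof. by rewrite /com mulDx mulxD opprD addrACA. Qed.

Lemma comBl x y z : com (x - y) z = com x z - com y z.
Proof. by rewrite /com mulBx mulxB !opprD !opprK addrACA. Qed.

Lemma comBr x y z : com x (y - z) = com x y - com x z.
Proof. by rewrite /com mulBx mulxB !opprD !opprK addrACA. Qed.

Lemma comZl (c : R) x y : com (c *: x) y = c *: com x y.
Proof. by rewrite /com mulZx mulxZ scalerBr. Qed.

Lemma comZr (c : R) x y : com x (c *: y) = c *: com x y.
Proof. by rewrite /com mulZx mulxZ scalerBr. Qed.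

Lemma comxx x : com x x = 0. Proof. exact: subrr. Qed.

Lemma com0x x : com 0 x = 0. Proof. by rewrite /com mul0x mulx0 subrr. Qed.

Lemma com_pos x : com (pos x) x = 0.
Proof.
have [pn np] := disjoint_mul_eq0 (meet_pos_neg x).
by rewrite /com -{2 3}(pos_sub_neg x) mulxB mulBx pn np !subr0 subrr.
Qed.

Lemma abs_com_le x y : le 0 x -> le 0 y -> le (abs (com x y)) (mul x y + mul y x).
Proof.
move=> x0 y0; have xy := mul_ge0 x0 y0; have yx := mul_ge0 y0 x0.
apply/abs_le; rewrite /com opprB; split; first exact: le_trans (le_subr _ yx) (le_addr _ yx).
by rewrite [X in le _ X]addrC; exact: le_trans (le_subr _ xy) (le_addr _ xy).
Qed.

Lemma disjoint_abs_com y x b : le 0 b -> meet y x = 0 -> meet y (abs (com x b)) = 0.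
Proof.
move=> b0 yx; have y0 := meet_eq0_ge0l yx; have x0 := meet_eq0_ge0r yx.
have [ybx yxb] := disjoint_mul yx b0.
apply: disjoint_le (abs_ge0 _) (abs_com_le x0 b0) _ => //.
by apply: disjointD => //; apply: mul_ge0.
Qed.

(* The truncations (a - k b)^+ decrease in steps r_k with 0 <= r_k <= b; each
   increment [r_k, b] of the commutator is disjoint from the previous ones
   and from (a - (k+1) b)^+, so the sum stays bounded by 2 b^2. *)
Lemma com_truncation a b k : le 0 a -> le 0 b ->
  le (abs (com (a - pos (a - k%:R *: b)) b)) (mul b b + mul b b) /\
  meet (abs (com (a - pos (a - k%:R *: b)) b)) (pos (a - k%:R *: b)) = 0.
Proof.
move=> a0 b0; set W := mul b b + mul b b.
pose P i := pos (a - i%:R *: b); rewrite -/(P k).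
have P0 i : le 0 (P i) by apply: pos_ge0.
have PS i : P i.+1 = pos ((a - i%:R *: b) - b).
  by rewrite /P mulrSr scalerDl scale1r opprD addrA.
elim: k => [|k [IH1 IH2]].
  rewrite /P scale0r subr0 ge0_pos // subrr com0x abs0.
  by split; [apply: add_ge0; apply: sqr_ge0 | apply: meet0x].
have [r0 rb rd] := pos_decrement (a - k%:R *: b) b0; rewrite -PS -/(P k) in r0 rb rd.
set r := P k - P k.+1 in r0 rb rd.
have eQ : com (a - P k.+1) b = com (a - P k) b + com r b by rewrite -comDl addrA subrK.
have cr : le (abs (com r b)) W.
  exact: le_trans (abs_com_le r0 b0) (le_add (le_mul2r b0 rb) (le_mul2l b0 rb)).
have rP : le r (P k) by apply: le_subr.
have d1 : meet (abs (com (a - P k) b)) (abs (com r b)) = 0.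
  exact: disjoint_abs_com b0 (disjoint_le (abs_ge0 _) r0 rP IH2).
split; first by rewrite eQ; apply: le_abs_disjointD d1 IH1 cr.
have Pmono : le (P k.+1) (P k) by rewrite PS; apply: le_pos2; apply: le_subr.
rewrite meetC eQ; apply: disjoint_le (P0 _) (abs_ge0 _) (le_absD _ _) _.
apply: disjointD (P0 _) (abs_ge0 _) (abs_ge0 _) _ _.
  by rewrite meetC; apply: disjoint_le (abs_ge0 _) (P0 _) Pmono IH2.
have -> : com r b = - com (b - r) b by rewrite (comBl b r b) comxx sub0r opprK.
by rewrite absN; rewrite meetC in rd; exact: disjoint_abs_com b0 rd.
Qed.

Lemma abs_com_scaled_le a b (N : R) k : le 0 a -> le 0 b -> 0 < N ->
  le (abs ((k%:R * N) *: com a b))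
     (k%:R *: (mul b b + mul b b) + (N * N) *: (mul a a + mul a a)).
Proof.
move=> a0 b0 N0; have N0' : 0 <= N by lra.
have Na0 : le 0 (N *: a) := scale_ge0 N0' a0.
have [Qb _] := com_truncation k Na0 b0.
set p := pos (N *: a - k%:R *: b) in Qb *.
have pb : k%:R *: com p b = N *: com p a.
  rewrite -[LHS]comZr (_ : k%:R *: b = N *: a - (N *: a - k%:R *: b)).
    by rewrite comBr com_pos subr0 comZr.
  by rewrite opprB addrCA subrr addr0.
have pa : le p (N *: a).
  by apply: pos_least _ Na0; apply: le_subr; apply: scale_ge0 b0; apply: ler0n.
have cpa : le (abs (com p a)) (N *: (mul a a + mul a a)).
  apply: le_trans (abs_com_le (pos_ge0 _) a0) _; rewrite scalerDr.
  by apply: le_add; [rewrite -mulZx; apply: le_mul2r | rewrite -mulxZ; apply: le_mul2l].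
have -> : (k%:R * N) *: com a b = k%:R *: com (N *: a - p) b + N *: com p a.
  by rewrite -scalerA -comZl -pb -scalerDr -comDl subrK.
apply: le_absD2; rewrite absZ ?ler0n //; first exact: le_scale2l (ler0n _ _) Qb.
by rewrite -scalerA; apply: le_scale2l N0' cpa.
Qed.

Lemma abs_com_natmul_le a b n : le 0 a -> le 0 b ->
  le (abs (com a b) *+ n) (mul b b + mul b b + (mul a a + mul a a)).
Proof.
move=> a0 b0; set W := mul b b + mul b b; set V := mul a a + mul a a.
have V0 : le 0 V by apply: add_ge0; apply: sqr_ge0.
pose N : R := n.+1%:R; have N1 : 1 <= N by rewrite ler1n.
(* k := N^3 >= N * N lets the a^2-term be absorbed into k *: V. *)
pose K := (n.+1 ^ 3)%N; have eK : K%:R = N ^+ 3 :> R by rewrite natrX.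
have K0 : 0 < K%:R :> R by rewrite eK exprn_gt0 //; lra.
have NK : le (K%:R *: (N *: abs (com a b))) (K%:R *: (W + V)).
  rewrite scalerA -absZ; last by rewrite mulr_ge0 //; lra.
  have N0 : 0 < N by lra.
  apply: le_trans (abs_com_scaled_le K a0 b0 N0) _.
  rewrite [X in le _ X]scalerDr; apply: le_add (lexx _) _; apply: le_scale2r V0.
  by rewrite eK; nra.
rewrite -scaler_nat; apply: le_trans (le_scale2r _ (abs_ge0 _)) (le_scale2lK K0 NK).
by rewrite ler_nat.
Qed.

Hypothesis archA : archimedean le full.

Lemma mul_ge0_comm a b : le 0 a -> le 0 b -> mul a b = mul b a.
Proof.
move=> a0 b0; apply/eqP; rewrite -subr_eq0; apply/eqP; apply: abs_eq0.
exact: (@archA _ _ I I (abs_ge0 _) (fun n => abs_com_natmul_le n a0 b0)).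
Qed.

(** * Solving (1 + h) u = f *)

(* [one_plus h x] stands for (1 + h) x: A need not have a unit. *)
Definition one_plus h x := x + mul h x.

Lemma one_plusD h x y : one_plus h (x + y) = one_plus h x + one_plus h y.
Proof. by rewrite /one_plus mulxD addrACA. Qed.

Lemma one_plusB h x y : one_plus h (x - y) = one_plus h x - one_plus h y.
Proof. by rewrite /one_plus mulxB opprD addrACA. Qed.

Lemma one_plus_ge0 h x : le 0 h -> le 0 x -> le 0 (one_plus h x).
Proof. by move=> h0 x0; apply: add_ge0 x0 (mul_ge0 h0 x0). Qed.

Lemma le_one_plus h x : le 0 h -> le 0 x -> le x (one_plus h x).
Proof. by move=> h0 x0; apply: le_addr; apply: mul_ge0. Qed.

Lemma disjoint_one_plus h p q : le 0 h -> meet p q = 0 ->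
  meet (one_plus h p) (one_plus h q) = 0.
Proof.
move=> h0 pq; have p0 := meet_eq0_ge0l pq; have q0 := meet_eq0_ge0r pq.
have qp : meet q p = 0 by rewrite meetC.
have hp0 := mul_ge0 h0 p0; have hq0 := mul_ge0 h0 q0.
have [p_hq _] := disjoint_mul pq h0; have [q_hp _] := disjoint_mul qp h0.
have hp_hq : meet (mul h p) (mul h q) = 0.
  by rewrite meetC in q_hp; have [] := disjoint_mul q_hp h0.
rewrite meetC; apply: (disjointD (one_plus_ge0 h0 q0) p0 hp0); rewrite meetC.
  exact: (disjointD p0 q0 hq0).
by apply: (disjointD hp0 q0 hq0); rewrite // meetC.
Qed.

Lemma ge0_of_one_plus_ge0 h x : le 0 h -> le 0 (one_plus h x) -> le 0 x.
Proof.
move=> h0 hx; have d := disjoint_one_plus h0 (meet_pos_neg x).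
have [_ nx] := disjoint_pos_neg (one_plus_ge0 h0 (pos_ge0 x)) (one_plus_ge0 h0 (neg_ge0 x)) d.
rewrite -one_plusB pos_sub_neg ge0_neg // in nx.
have nx0 : neg x = 0.
  by apply: le_anti _ (neg_ge0 x); rewrite [X in le _ X]nx; apply: le_one_plus (neg_ge0 x).
by rewrite -(pos_sub_neg x) nx0 subr0; apply: pos_ge0.
Qed.

Lemma sqr_subZ x y (t : R) : mul y x = mul x y ->
  mul (x - t *: y) (x - t *: y) = mul x x - t *: mul x y - t *: mul x y + (t * t) *: mul y y.
Proof.
move=> yx; rewrite mulBx !mulxB !mulZx !mulxZ yx scalerA.
by rewrite opprD opprK addrA.
Qed.

(* e X = (h e - t e)^2 + t e (h e) for the expression X below, and X lies in
   the band of e. *)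
Lemma quadratic_ge0 h e (t : R) : le 0 h -> le 0 e -> 0 <= t ->
  le 0 ((t * t) *: e - t *: mul h e + mul h (mul h e)).
Proof.
move=> h0 e0 t0; have tt0 : 0 <= t * t by apply: mulr_ge0.
have he0 := mul_ge0 h0 e0; have hhe0 := mul_ge0 h0 he0.
have te0 := scale_ge0 t0 he0; have tte0 := scale_ge0 tt0 e0.
apply: (@band_mul_ge0 e _ ((t * t) *: e + t *: mul h e + mul h (mul h e))) => //.
- have e_he : mul e (mul h e) = mul (mul h e) e := mul_ge0_comm e0 he0.
  rewrite mulxD mulxB !mulxZ e_he.
  have -> : mul e (mul h (mul h e)) = mul (mul h e) (mul h e).
    by rewrite mulA (mul_ge0_comm e0 h0).
  have -> : forall u v w : A, (t * t) *: w - t *: v + u = (u - t *: v - t *: v + (t * t) *: w) + t *: v.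
    by move=> u v w; rewrite [RHS]addrAC subrK [LHS]addrC addrA [RHS]addrAC.
  rewrite -sqr_subZ; last by rewrite e_he.
  by apply: add_ge0; [apply: sqr_ge0 | apply: scale_ge0 t0 (mul_ge0 he0 e0)].
- apply/abs_le; rewrite !opprD opprK; split.
    by apply: le_add (lexx _); apply: le_add (lexx _) (ge0_opp_le te0).
  by apply: le_add (ge0_opp_le hhe0); apply: le_add (ge0_opp_le tte0) (lexx _).
- move=> y y0 ye; have [yhe _] := disjoint_mul ye h0; have [yhhe _] := disjoint_mul yhe h0.
  apply: disjointD (add_ge0 tte0 te0) hhe0 _ yhhe => //.
  by apply: disjointD => //; apply: disjointZ.
Qed.

Lemma le_mul_pos_sub h e (N : R) : le 0 h -> le 0 e -> 0 < N ->
  le (mul h (pos (e - N^-1 *: mul h e))) (N *: e).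
Proof.
move=> h0 e0 N0; have Ni : 0 <= N^-1 by rewrite invr_ge0; lra.
rewrite -(pos_neg_mull _ h0).1 mulxB mulxZ.
apply: pos_least; last by apply: scale_ge0 e0; lra.
apply: le_of_sub_ge0; have := scale_ge0 Ni (quadratic_ge0 h0 e0 (_ : 0 <= N)).
rewrite scalerDr scalerBr !scalerA mulrA mulVf ?lt0r_neq0 // mul1r scale1r.
by rewrite opprD opprK addrA; apply; lra.
Qed.

(* w := (e - h e / N)^+ has (1 + h) w <= (1 + N) e, hence w = 0, i.e. N e <= h e. *)
Lemma one_plus_minorant_eq0 h e : le 0 h -> le 0 e ->
  (forall y, le 0 y -> le (one_plus h y) e -> y = 0) -> e = 0.
Proof.
move=> h0 e0 minor; apply: (@archA e (mul h e) I I) => // n.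
pose N : R := n.+1%:R; have N0 : 0 < N by rewrite ltr0n.
set w := pos (e - N^-1 *: mul h e).
have w_le : le (one_plus h w) ((1 + N) *: e).
  rewrite scalerDl scale1r; apply: le_add (le_mul_pos_sub h0 e0 N0).
  have Nhe : le 0 (N^-1 *: mul h e) by apply: scale_ge0 (mul_ge0 h0 e0); rewrite invr_ge0; lra.
  by apply: pos_least _ e0; apply: le_subr.
have N1 : 0 < 1 + N by lra.
have w0 : w = 0.
  rewrite -(scaleKV w N1) (minor ((1 + N)^-1 *: w)) ?scaler0 //.
    by apply: scale_ge0 (pos_ge0 _); rewrite invr_ge0; lra.
  rewrite /one_plus mulxZ -scalerDr -[X in le _ X](scaleVK e N1).
  by apply: le_scale2l w_le; rewrite invr_ge0; lra.
have e_le : le e (N^-1 *: mul h e) by apply: le_of_sub_le0; apply: pos_eq0_le0.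
rewrite -scaler_nat; apply: le_trans (le_scale2r (_ : n%:R <= N) e0) _; first by rewrite ler_nat.
by rewrite -[X in le _ X](scaleKV (mul h e) N0); apply: le_scale2l e_le; lra.
Qed.

(** * Intermediate algebras are order ideals *)

Lemma le_mul_one_plus_sqr g u : le 0 g -> le 0 u -> le (mul g u) (one_plus (mul g g) u).
Proof.
move=> g0 u0; apply: le_of_sub_ge0.
have := quadratic_ge0 g0 u0 ler01; rewrite mulr1 !scale1r mulA.
by rewrite /one_plus addrAC.
Qed.

Lemma sqr_le_of_one_plus h q k : le 0 h -> le 0 q -> le (one_plus h q) k ->
  le (mul k q) (one_plus h q) -> le (mul q q) q.
Proof.
move=> h0 q0 Tq_le kq_le.
have q_le : le q (k - mul h q).
  by apply: le_of_sub_ge0; rewrite -addrA -opprD [mul h q + q]addrC; apply: sub_ge0.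
have qq_le : le (mul q q) (mul k q - mul h (mul q q)).
  by have := le_mul2r q0 q_le; rewrite mulBx mulA.
have Tqq_le : le (one_plus h (mul q q)) (one_plus h q).
  by apply: le_trans kq_le; have := le_add2r (mul h (mul q q)) qq_le; rewrite subrK.
apply: le_of_sub_ge0; apply: (ge0_of_one_plus_ge0 h0); rewrite one_plusB.
exact: sub_ge0.
Qed.

Lemma one_plus_sqr_bounded g u : le 0 g -> le 0 u -> le (one_plus (mul g g) u) g ->
  le (mul u u) u /\ le (mul (mul g u) (mul g u)) (mul g u).
Proof.
move=> g0 u0 Tu_le; have gg0 := sqr_ge0 g; have gu0 := mul_ge0 g0 u0.
split; first exact: sqr_le_of_one_plus gg0 u0 Tu_le (le_mul_one_plus_sqr g0 u0).
apply: (sqr_le_of_one_plus gg0 gu0 (k := mul g g)).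
  have -> : one_plus (mul g g) (mul g u) = mul g (one_plus (mul g g) u).
    by rewrite /one_plus mulxD !mulA.
  exact: le_mul2l.
by rewrite /one_plus addrC; apply: le_addr.
Qed.

Lemma one_plus_sup h f s : le 0 h -> le 0 f ->
  (forall x, le 0 x -> le (one_plus h x) f -> le x s) ->
  (forall u, (forall x, le 0 x -> le (one_plus h x) f -> le x u) -> le s u) ->
  one_plus h s = f.
Proof.
move=> h0 f0 s_ub s_least.
have Ts_le : le (one_plus h s) f.
  apply: le_of_sub_le0; apply: pos_eq0_le0.
  apply: (one_plus_minorant_eq0 h0 (pos_ge0 _)) => y y0 Ty.
  have : le s (s - y).
    apply: s_least => x x0 Tx.
    have : le (one_plus h y) (one_plus h (s - x)).
      apply: le_trans Ty _; apply: pos_least.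
        by rewrite one_plusB; apply: le_add2l; apply: le_opp.
      by apply: one_plus_ge0 h0 _; apply: sub_ge0; apply: s_ub.
    move/sub_ge0; rewrite -one_plusB => /(ge0_of_one_plus_ge0 h0).
    by rewrite addrAC => /le_of_sub_ge0.
  move/sub_ge0; rewrite addrAC subrr add0r => /le_opp; rewrite opprK oppr0 => y_le0.
  exact: le_anti y_le0 y0.
have s0 : le 0 s by apply: (s_ub _ (lexx 0)); rewrite /one_plus mulx0 addr0.
apply/eqP; rewrite eq_sym -subr_eq0; apply/eqP.
apply: (one_plus_minorant_eq0 h0 (sub_ge0 Ts_le)) => y y0 Ty.
have : le (s + y) s.
  apply: s_ub (add_ge0 s0 y0) _; rewrite one_plusD.
  by have := le_add2l (one_plus h s) Ty; rewrite [_ + (f - _)]addrC subrK.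
by move/(le_add2r (- s)); rewrite addrAC subrr add0r => /le_anti; apply.
Qed.

Lemma one_plus_onto h f : le 0 h -> le 0 f -> exists u, le 0 u /\ one_plus h u = f.
Proof.
move=> h0 f0; pose S x := le 0 x /\ le (one_plus h x) f.
have S0 : S 0 by split; [apply: lexx | rewrite /one_plus mulx0 addr0].
have [s [s_ub s_least]] : exists s, (forall x, S x -> le x s) /\
    (forall u, (forall x, S x -> le x u) -> le s u).
  apply: dedekind_sup; first by exists 0.
  by exists f => x [x0 Tx]; apply: le_trans (le_one_plus h0 x0) Tx.
exists s; split; first exact: s_ub S0.
apply: one_plus_sup h0 f0 _ _ => [x x0 Tx | u u_ub]; first exact: s_ub.
by apply: s_least => x [x0 Tx]; apply: u_ub.
Qed.

Lemma bounded_of_sqr_le a : le (mul a a) (abs a) -> bounded_elt mul le join a.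
Proof. by move=> aa; exists 1; rewrite scale1r; split=> //; apply: ltr01. Qed.

Lemma intermediate_algebra_solid_ge0 B b f : intermediate_algebra mul le join B ->
  B b -> le 0 f -> le f (abs b) -> B f.
Proof.
move=> [[[_ [BD _]] BM] Bbnd] Bb f0 fb; set g := abs b in fb.
have [u [u0 Tu]] := one_plus_onto (sqr_ge0 g) f0.
have Tu_le : le (one_plus (mul g g) u) g by rewrite Tu.
have [uu gugu] := one_plus_sqr_bounded (abs_ge0 b) u0 Tu_le.
have Bu : B u by apply: Bbnd; apply: bounded_of_sqr_le; rewrite ge0_abs.
have Bbu : B (mul b u) by apply: Bbnd; apply: bounded_of_sqr_le; rewrite sqr_abs abs_mulr.
by rewrite -Tu /one_plus -sqr_abs -mulA; apply: BD => //; apply: BM.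
Qed.

Lemma intermediate_algebra_order_ideal B : intermediate_algebra mul le join B ->
  order_ideal le join B.
Proof.
move=> iaB; have [[subB _] _] := iaB; have [_ [BD BZ]] := subB; split=> // a b Bb ab.
rewrite -(pos_sub_neg a) -scaleN1r; apply: BD; last apply: BZ.
  exact: intermediate_algebra_solid_ge0 iaB Bb (pos_ge0 a) (le_trans (pos_le_abs a) ab).
exact: intermediate_algebra_solid_ge0 iaB Bb (neg_ge0 a) (le_trans (neg_le_abs a) ab).
Qed.

Lemma is_assoc_algebra_sub B : is_subspace B -> (forall x y, B x -> B y -> B (mul x y)) ->
  is_assoc_algebra mul B.
Proof.
move=> subB BM; split=> //; split=> //.
split; first by move=> x y z _ _ _; apply: mulA.
split; first by move=> x y z _ _ _; apply: mulDx.
split; first by move=> x y z _ _ _; apply: mulxD.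
split; first by move=> c x y _ _; apply: mulZx.
by move=> c x y _ _; apply: mulxZ.
Qed.

Lemma order_ideal_f_algebra B : order_ideal le join B ->
  (forall x y, B x -> B y -> B (mul x y)) -> is_f_algebra mul le meet join B.
Proof.
move=> idB BM; split; first exact: is_assoc_algebra_sub idB.1 BM.
split; first exact: order_ideal_vector_lattice.
by split=> [x y _ _ | a b c _ _ _]; [apply: mul_ge0 | apply: meet_mul].
Qed.
End FAlgebra.
End VectorLattice.

Theorem corollary10 (R : realType) (A : lmodType R)
  (mul : A -> A -> A) (le : A -> A -> Prop) (meet join : A -> A -> A) :
  is_f_algebra mul le meet join full ->
  archimedean le full ->
  semiprime mul full ->
  dedekind_complete le full ->
  forall B : A -> Prop, intermediate_algebra mul le join B ->
    order_ideal le join B /\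
    is_f_algebra mul le meet join B /\
    semiprime mul B /\
    dedekind_complete le B.
Proof.
move=> [algA [vlA [mulA_ge0 meetA_mul]]] archA spA dcA B iaB.
have mul_ge0 x y : le 0 x -> le 0 y -> le 0 (mul x y) := mulA_ge0 x y I I.
have meet_mul a b c : meet a b = 0 -> le 0 c ->
    meet (mul a c) b = 0 /\ meet (mul c a) b = 0 := meetA_mul a b c I I I.
have idB := intermediate_algebra_order_ideal vlA dcA algA mul_ge0 meet_mul spA archA iaB.
have [[_ BM] _] := iaB.
split=> //; split; first exact: (order_ideal_f_algebra vlA algA mul_ge0 meet_mul idB BM).
by split=> [a _|]; [apply: spA | exact: (order_ideal_dedekind_complete vlA dcA idB)].
Qed.
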